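(* Let ${}_{\mathfrak Y}\mathfrak B_{\mathfrak X}$ and ${}_{\mathfrak X}\mathfrak C_{\mathfrak W}$ be left-fibrant (respectively left-free, left-principal) graphs of bisets. Then $\mathfrak B\otimes_{\mathfrak X}\mathfrak C$ is a left-fibrant (respectively left-free, left-principal) graph of bisets.
   Context: A graph is a set $V\sqcup E$ with maps $x\mapsto x^-\in V$, $x\mapsto\bar x$, $\bar{\bar x}=x$, $x=x^-\iff x=\bar x\iff x\in V$; $x^+=(\bar x)^-$. Graph morphisms commute with these (may send edges to vertices); simplicial ones send edges to edges. A graph of groups attaches to each $x$ a group $G_x$ and homomorphisms $G_x\to G_{x^-}$, $G_x\to G_{\bar x}$ ($G_x\to G_{\bar x}\to G_x$ identity, both identity for vertices). A $\mathfrak Y$-$\mathfrak X$ graph of bisets: a graph $\mathfrak B$, graph morphisms $\lambda\colon\mathfrak B\to\mathfrak Y$, $\rho\colon\mathfrak B\to\mathfrak X$, $G_{\lambda(z)}$-$G_{\rho(z)}$-bisets $B_z$, and congruences $b\mapsto b^-\colon B_z\to B_{z^-}$, $b\mapsto\bar b\colon B_z\to B_{\bar z}$ w.r.t. the corresponding group homomorphisms, satisfying the same axioms. Product: $\mathfrak B\otimes_{\mathfrak X}\mathfrak C$ has underlying graph $\{(b,c)\mid\rho(b)=\lambda(c)\}$, $(b,c)^-=(b^-,c^-)$, $\overline{(b,c)}=(\bar b,\bar c)$, $\lambda(b,c)=\lambda(b)$, $\rho(b,c)=\rho(c)$, biset $B_b\otimes_{G_{\rho(b)}}C_c$ at $(b,c)$.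 Left-fibrant: $\rho$ simplicial and for every vertex $v$ and edge $f$ of the target with $f^-=\rho(v)$, the map $\bigsqcup_{e\in\rho^{-1}(f),\,e^-=v}G_{\lambda(v)}\otimes_{G_{\lambda(e)}}B_e\to B_v$, $g\otimes b\mapsto gb^-$, is an isomorphism of $G_{\lambda(v)}$-$G_f$-bisets. Left-free: left-fibrant and every $B_z$ free as a left set. Left-principal: left-fibrant, every $B_z$ left-principal (simply transitive left action), and $\rho$ a graph isomorphism. *)

From Stdlib Require Import Relations ClassicalEpsilon.



Record Group := {
  gcar :> Type;
  gmul : gcar -> gcar -> gcar;
  gone : gcar;
  ginv : gcar -> gcar;
  gmulA : forall x y z, gmul x (gmul y z) = gmul (gmul x y) z;
  gmul1l : forall x, gmul gone x = x;
  gmulVl : forall x, gmul (ginv x) x = gone }.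
Arguments gmul {g}.
Arguments gone {g}.
Arguments ginv {g}.

Definition is_hom {G H : Group} (f : G -> H) : Prop :=
  forall x y, f (gmul x y) = gmul (f x) (f y).

Definition tr {A : Type} (P : A -> Type) {x y : A} (e : x = y) (u : P x) : P y :=
  eq_rect x P u y e.
Arguments tr {A} P {x y} e u.

(* Graphs (Serre style): a set with x |-> x^- and x |-> bar x           *)
Record Graph := { gv :> Type; gst : gv -> gv; gbar : gv -> gv }.
Arguments gst {g}.
Arguments gbar {g}.

Definition is_vertex {X : Graph} (x : X) : Prop := gst x = x.

Definition is_graph (X : Graph) : Prop :=
  (forall x : X, gbar (gbar x) = x) /\
  (forall x : X, is_vertex (gst x)) /\
  (forall x : X, gst x = x <-> gbar x = x).

Definition is_morphism {X Y : Graph} (f : X -> Y) : Prop :=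
  (forall x, f (gst x) = gst (f x)) /\ (forall x, f (gbar x) = gbar (f x)).

Definition is_simplicial {X Y : Graph} (f : X -> Y) : Prop :=
  is_morphism f /\ (forall x, ~ is_vertex x -> ~ is_vertex (f x)).

Definition is_graph_iso {X Y : Graph} (f : X -> Y) : Prop :=
  is_morphism f /\
  exists g : Y -> X, (forall x, g (f x) = x) /\ (forall y, f (g y) = y).

Record GoG (X : Graph) := {
  ggrp : X -> Group;
  ghst : forall x, ggrp x -> ggrp (gst x);
  ghbar : forall x, ggrp x -> ggrp (gbar x) }.
Arguments ggrp {X}.
Arguments ghst {X} g {x}.
Arguments ghbar {X} g {x}.

Definition is_GoG {X : Graph} (G : GoG X) : Prop :=
  is_graph X /\
  (forall x, is_hom (@ghst X G x)) /\ (forall x, is_hom (@ghbar X G x)) /\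
  (forall x (e : gbar (gbar x) = x) (g : ggrp G x),
      tr (ggrp G) e (ghbar G (ghbar G g)) = g) /\
  (forall x (e : gst x = x) (g : ggrp G x), tr (ggrp G) e (ghst G g) = g) /\
  (forall x (e : gbar x = x) (g : ggrp G x), tr (ggrp G) e (ghbar G g) = g).

Section GoBdef.
Variables (Y X : Graph) (GY : GoG Y) (GX : GoG X).

Record GoB := {
  bg : Graph;
  blam : bg -> Y;
  brho : bg -> X;
  bs : bg -> Type;
  blact : forall z, ggrp GY (blam z) -> bs z -> bs z;
  bract : forall z, bs z -> ggrp GX (brho z) -> bs z;
  bmin : forall z, bs z -> bs (gst z);
  bbar : forall z, bs z -> bs (gbar z) }.

Record IsGoB (B : GoB) : Prop := {
  gob_graph : is_graph (bg B);
  gob_lam_st : forall z, blam B (gst z) = gst (blam B z);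
  gob_lam_bar : forall z, blam B (gbar z) = gbar (blam B z);
  gob_rho_st : forall z, brho B (gst z) = gst (brho B z);
  gob_rho_bar : forall z, brho B (gbar z) = gbar (brho B z);
  gob_lact1 : forall z b, blact B z gone b = b;
  gob_lactM : forall z g h b, blact B z (gmul g h) b = blact B z g (blact B z h b);
  gob_ract1 : forall z b, bract B z b gone = b;
  gob_ractM : forall z b g h, bract B z b (gmul g h) = bract B z (bract B z b g) h;
  gob_lract : forall z g b h,
      blact B z g (bract B z b h) = bract B z (blact B z g b) h;
  gob_cong_st : forall z (e1 : gst (blam B z) = blam B (gst z))
                  (e2 : gst (brho B z) = brho B (gst z)) g b h,
      bmin B z (blact B z g (bract B z b h)) =
      blact B (gst z) (tr (ggrp GY) e1 (ghst GY g))
            (bract B (gst z) (bmin B z b) (tr (ggrp GX) e2 (ghst GX h)));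
  gob_cong_bar : forall z (e1 : gbar (blam B z) = blam B (gbar z))
                  (e2 : gbar (brho B z) = brho B (gbar z)) g b h,
      bbar B z (blact B z g (bract B z b h)) =
      blact B (gbar z) (tr (ggrp GY) e1 (ghbar GY g))
            (bract B (gbar z) (bbar B z b) (tr (ggrp GX) e2 (ghbar GX h)));
  gob_bar_bar : forall z (e : gbar (gbar z) = z) b,
      tr (bs B) e (bbar B (gbar z) (bbar B z b)) = b;
  gob_st_vert : forall z (e : gst z = z) b, tr (bs B) e (bmin B z b) = b;
  gob_bar_vert : forall z (e : gbar z = z) b, tr (bs B) e (bbar B z b) = b }.

(* A map [m] out of a disjoint union of sets, together with the relation [R]
   generating the defining equivalence of a (disjoint union of) balanced
   products, induces a bijection from the quotient onto the target. *)
Definition induces_bijection {T Z : Type} (R : relation T) (m : T -> Z) : Prop :=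
  (forall z, exists t, m t = z) /\
  (forall t t', m t = m t' <-> clos_refl_sym_trans T R t t').

Definition fib (B : GoB) (v : bg B) (f : X) : Type :=
  {e : bg B | brho B e = f /\ gst e = v}.

(* the disjoint union  \bigsqcup_e  G_{lam v} x B_e  (before quotienting) *)
Definition fibsum (B : GoB) (v : bg B) (f : X) : Type :=
  {e : fib B v f & (ggrp GY (blam B v) * bs B (proj1_sig e))%type}.

(* relation defining  \bigsqcup_e G_{lam v} (x)_{G_{lam e}} B_e  :
   (g . h, b) ~ (g, h . b), where G_{lam e} acts on G_{lam v} through
   G_{lam e} -> G_{lam e^-} = G_{lam v} *)
Definition fibrel (B : GoB) (v : bg B) (f : X) : relation (fibsum B v f) :=
  fun t1 t2 => exists (e : fib B v f) (g : ggrp GY (blam B v))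
      (h : ggrp GY (blam B (proj1_sig e))) (b : bs B (proj1_sig e))
      (q : gst (blam B (proj1_sig e)) = blam B v),
    t1 = existT _ e (gmul g (tr (ggrp GY) q (ghst GY h)), b) /\
    t2 = existT _ e (g, blact B (proj1_sig e) h b).

Definition fibmap (B : GoB) (v : bg B) (f : X) (t : fibsum B v f) : bs B v :=
  blact B v (fst (projT2 t))
    (tr (bs B) (proj2 (proj2_sig (projT1 t))) (bmin B _ (snd (projT2 t)))).

Definition left_fibrant (B : GoB) : Prop :=
  IsGoB B /\ is_simplicial (brho B) /\
  forall (v : bg B) (f : X), is_vertex v -> ~ is_vertex f -> gst f = brho B v ->
    induces_bijection (fibrel B v f) (fibmap B v f).

Definition left_free (B : GoB) : Prop :=
  left_fibrant B /\
  forall z g (b : bs B z), blact B z g b = b -> g = gone.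

Definition left_principal (B : GoB) : Prop :=
  left_fibrant B /\
  (forall z, (exists b : bs B z, True) /\
             forall b b' : bs B z, exists! g, blact B z g b = b') /\
  is_graph_iso (brho B).

End GoBdef.

Arguments GoB {Y X} GY GX.
Arguments IsGoB {Y X GY GX} B.
Arguments left_fibrant {Y X GY GX} B.
Arguments left_free {Y X GY GX} B.
Arguments left_principal {Y X GY GX} B.
Arguments gob_rho_st {Y X GY GX B} _ z.
Arguments gob_rho_bar {Y X GY GX B} _ z.
Arguments gob_lam_st {Y X GY GX B} _ z.
Arguments gob_lam_bar {Y X GY GX B} _ z.
Arguments bg {Y X GY GX}.
Arguments blam {Y X GY GX}.
Arguments brho {Y X GY GX}.
Arguments bs {Y X GY GX}.
Arguments blact {Y X GY GX}.
Arguments bract {Y X GY GX}.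
Arguments bmin {Y X GY GX}.
Arguments bbar {Y X GY GX}.

Definition Quot {T : Type} (R : relation T) : Type :=
  {P : T -> Prop | exists t, P = clos_refl_sym_trans T R t}.

Definition cls {T : Type} (R : relation T) (t : T) : Quot R :=
  exist _ (clos_refl_sym_trans T R t) (ex_intro _ t eq_refl).

Definition rep {T : Type} {R : relation T} (q : Quot R) : T :=
  proj1_sig (constructive_indefinite_description _ (proj2_sig q)).

Section Product.
Variables (Y X W : Graph) (GY : GoG Y) (GX : GoG X) (GW : GoG W).
Variables (B : GoB GY GX) (C : GoB GX GW).
Variables (HB : IsGoB B) (HC : IsGoB C).

Definition pcar : Type := {p : (bg B * bg C)%type | brho B (fst p) = blam C (snd p)}.

Definition pst (p : pcar) : pcar :=
  exist _ (gst (fst (proj1_sig p)), gst (snd (proj1_sig p)))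
    (eq_trans (gob_rho_st HB _)
      (eq_trans (f_equal gst (proj2_sig p)) (eq_sym (gob_lam_st HC _)))).

Definition pbar (p : pcar) : pcar :=
  exist _ (gbar (fst (proj1_sig p)), gbar (snd (proj1_sig p)))
    (eq_trans (gob_rho_bar HB _)
      (eq_trans (f_equal gbar (proj2_sig p)) (eq_sym (gob_lam_bar HC _)))).

Definition pgraph : Graph := {| gv := pcar; gst := pst; gbar := pbar |}.

Definition tens_rel {b : bg B} {c : bg C} (p : brho B b = blam C c)
  : relation (bs B b * bs C c) :=
  fun t1 t2 => exists x (h : ggrp GX (brho B b)) y,
    t1 = (bract B b x h, y) /\ t2 = (x, blact C c (tr (ggrp GX) p h) y).

Definition pbs (p : pcar) : Type := Quot (tens_rel (proj2_sig p)).

Definition prep {p : pcar} (q : pbs p) : (bs B (fst (proj1_sig p)) * bs C (snd (proj1_sig p)))%type :=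
  rep q.

Definition plam (p : pgraph) : Y := blam B (fst (proj1_sig p)).
Definition prho (p : pgraph) : W := brho C (snd (proj1_sig p)).

Definition plact (p : pgraph) (g : ggrp GY (plam p)) (q : pbs p) : pbs p :=
  cls (tens_rel (proj2_sig p))
    (blact B _ g (fst (prep q)), snd (prep q)).

Definition pract (p : pgraph) (q : pbs p) (h : ggrp GW (prho p)) : pbs p :=
  cls (tens_rel (proj2_sig p))
    (fst (prep q), bract C _ (snd (prep q)) h).

Definition pmin (p : pgraph) (q : pbs p) : pbs (pst p) :=
  cls (tens_rel (proj2_sig (pst p)))
    (bmin B _ (fst (prep q)), bmin C _ (snd (prep q))).

Definition pbarb (p : pgraph) (q : pbs p) : pbs (pbar p) :=
  cls (tens_rel (proj2_sig (pbar p)))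
    (bbar B _ (fst (prep q)), bbar C _ (snd (prep q))).

Definition gob_prod : GoB GY GW :=
  {| bg := pgraph; blam := plam; brho := prho; bs := pbs;
     blact := plact; bract := pract; bmin := pmin; bbar := pbarb |}.

End Product.
Arguments gob_prod {Y X W GY GX GW B C} HB HC.

From Stdlib Require Import Relations Classical ClassicalEpsilon ProofIrrelevance.
From Stdlib Require Import FunctionalExtensionality PropExtensionality.

(* At a vertex (v1, v2) of B ⊗ C and an edge f with f^- = ρ(v2), the fibrancy map factors as
     ⊔_{e2} ⊔_{e1} G_{λ(v1)} ⊗ B_{e1} ⊗ C_{e2}  ->  ⊔_{e2} B_{v1} ⊗ C_{e2}  ->  B_{v1} ⊗ C_{v2},
   with e2 running over the edges of C at v2 above f and e1 over the edges of B at v1 above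
   λ(e2) (only e1 = v1 when λ(e2) is a vertex).  The first map is a union of fibrancy
   isomorphisms of B, the second the fibrancy isomorphism of C, both tensored with the other
   factor.  In B_b ⊗ C_c the balancing element in [g x, y] = [x', y'] is pinned down by the
   C-components, so freeness and principality of both factors pass to the product. *)

Arguments gob_graph {Y X GY GX B} _.
Arguments gob_lact1 {Y X GY GX B} _ z b.
Arguments gob_lactM {Y X GY GX B} _ z g h b.
Arguments gob_ract1 {Y X GY GX B} _ z b.
Arguments gob_ractM {Y X GY GX B} _ z b g h.
Arguments gob_lract {Y X GY GX B} _ z g b h.
Arguments gob_cong_st {Y X GY GX B} _ z e1 e2 g b h.
Arguments gob_cong_bar {Y X GY GX B} _ z e1 e2 g b h.
Arguments gob_bar_bar {Y X GY GX B} _ z e b.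
Arguments gob_st_vert {Y X GY GX B} _ z e b.
Arguments gob_bar_vert {Y X GY GX B} _ z e b.
Arguments fib {Y X GY GX} B v f.
Arguments fibsum {Y X GY GX} B v f.
Arguments fibrel {Y X GY GX} B v f _ _.
Arguments fibmap {Y X GY GX} B v f t.

Lemma tr_irr {A} (P : A -> Type) {x y : A} (e e' : x = y) u : tr P e u = tr P e' u.
Proof. rewrite (proof_irrelevance _ e e'). reflexivity. Qed.

Lemma tr_refl {A} (P : A -> Type) {x : A} (e : x = x) u : tr P e u = u.
Proof. rewrite (proof_irrelevance _ e eq_refl). reflexivity. Qed.

Lemma tr_trans {A} (P : A -> Type) {x y z : A} (e1 : x = y) (e2 : y = z) u :
  tr P e2 (tr P e1 u) = tr P (eq_trans e1 e2) u.
Proof. destruct e2, e1. reflexivity. Qed.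

Lemma tr_move {A} (P : A -> Type) {x y : A} (e : x = y) u w :
  tr P e u = w -> u = tr P (eq_sym e) w.
Proof. destruct e. auto. Qed.

Lemma tr_gmul {A} (F : A -> Group) {x y : A} (e : x = y) (a b : F x) :
  tr F e (gmul a b) = gmul (tr F e a) (tr F e b).
Proof. destruct e. reflexivity. Qed.

Lemma tr_gone {A} (F : A -> Group) {x y : A} (e : x = y) : tr F e gone = gone.
Proof. destruct e. reflexivity. Qed.

Lemma tr_ginv {A} (F : A -> Group) {x y : A} (e : x = y) (a : F x) :
  tr F e (ginv a) = ginv (tr F e a).
Proof. destruct e. reflexivity. Qed.

Ltac tr_irr_tac := match goal with |- tr ?P _ ?u = tr _ _ ?u => apply (tr_irr P) end.

Section GroupTheory.
Variable G : Group.

Lemma gmulV (x : G) : gmul x (ginv x) = gone.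
Proof.
  rewrite <- (gmul1l G (gmul x (ginv x))), <- (gmulVl G (ginv x)) at 1.
  rewrite <- gmulA, (gmulA G (ginv x)), gmulVl, gmul1l, gmulVl. reflexivity.
Qed.

Lemma gmul1r (x : G) : gmul x gone = x.
Proof. rewrite <- (gmulVl G x), gmulA, gmulV, gmul1l. reflexivity. Qed.

Lemma gmul_cancel_l (a x y : G) : gmul a x = gmul a y -> x = y.
Proof.
  intro H. rewrite <- (gmul1l G x), <- (gmul1l G y), <- (gmulVl G a), <- !gmulA, H.
  reflexivity.
Qed.

End GroupTheory.

Lemma hom_gone {G H : Group} (f : G -> H) : is_hom f -> f gone = gone.
Proof.
  intro Hf. apply (gmul_cancel_l H (f gone)). rewrite <- Hf, gmul1l, gmul1r. reflexivity.
Qed.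

Lemma hom_ginv {G H : Group} (f : G -> H) : is_hom f -> forall x, f (ginv x) = ginv (f x).
Proof.
  intros Hf x. apply (gmul_cancel_l H (f x)). rewrite <- Hf, !gmulV. apply hom_gone, Hf.
Qed.

Lemma clos_rst_equivalence {T} (R : relation T) :
  equivalence T R -> inclusion T (clos_refl_sym_trans T R) R.
Proof. intros [Hr Ht Hs] a b H. induction H; eauto. Qed.

Section Quotients.
Variables (T : Type) (R : relation T).

Lemma cls_eq t t' : cls R t = cls R t' <-> clos_refl_sym_trans T R t t'.
Proof.
  split.
  - intro H. apply (f_equal (@proj1_sig _ _)) in H. simpl in H.
    apply rst_sym. rewrite <- H. apply rst_refl.
  - intro H.
    assert (E : clos_refl_sym_trans T R t = clos_refl_sym_trans T R t').
    { apply functional_extensionality; intro u. apply propositional_extensionality.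
      split; intro Hu; eapply rst_trans; eauto using rst_sym. }
    unfold cls.
    generalize (ex_intro (fun s => clos_refl_sym_trans T R t = clos_refl_sym_trans T R s)
                  t eq_refl).
    generalize (ex_intro (fun s => clos_refl_sym_trans T R t' = clos_refl_sym_trans T R s)
                  t' eq_refl).
    rewrite E. intros. f_equal. apply proof_irrelevance.
Qed.

Lemma cls_rep (q : Quot R) : cls R (rep q) = q.
Proof.
  unfold rep. destruct (constructive_indefinite_description _ (proj2_sig q)) as [t Ht].
  destruct q as [Q HQ]. simpl in *. subst Q. unfold cls. f_equal. apply proof_irrelevance.
Qed.

Lemma Quot_ind (Pr : Quot R -> Prop) : (forall t, Pr (cls R t)) -> forall q, Pr q.
Proof. intros H q. rewrite <- (cls_rep q). apply H. Qed.

End Quotients.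

Lemma cls_rep_map {T T'} (R : relation T) (R' : relation T') (F : T -> T') :
  (forall t t', R t t' -> clos_refl_sym_trans T' R' (F t) (F t')) ->
  forall t, cls R' (F (rep (cls R t))) = cls R' (F t).
Proof.
  intros HF t. apply cls_eq.
  assert (H : clos_refl_sym_trans T R (rep (cls R t)) t) by (apply cls_eq, cls_rep).
  induction H; eauto using rst_refl, rst_sym, rst_trans.
Qed.

Lemma simplicial_reflects_vertex {X Y : Graph} (f : X -> Y) x :
  is_simplicial f -> is_vertex (f x) -> is_vertex x.
Proof. intros [_ Hf] Hx. apply NNPP. intro H. exact (Hf x H Hx). Qed.

Section GraphOfGroups.
Context {X : Graph} {G : GoG X} (HG : is_GoG G).

Lemma ghst_gmul x (a b : ggrp G x) : ghst G (gmul a b) = gmul (ghst G a) (ghst G b).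
Proof. apply HG. Qed.

Lemma ghst_gone x : ghst G (x:=x) gone = gone.
Proof. apply hom_gone, HG. Qed.

Lemma ghst_ginv x (a : ggrp G x) : ghst G (ginv a) = ginv (ghst G a).
Proof. apply hom_ginv, HG. Qed.

Lemma ghbar_gone x : ghbar G (x:=x) gone = gone.
Proof. apply hom_gone, HG. Qed.

Lemma ghst_vertex x (e : gst x = x) (a : ggrp G x) : tr (ggrp G) e (ghst G a) = a.
Proof. apply HG. Qed.

Lemma ghst_tr {x y : X} (e : x = y) (h : ggrp G x) :
  ghst G (tr (ggrp G) e h) = tr (ggrp G) (f_equal gst e) (ghst G h).
Proof. destruct e. reflexivity. Qed.

Lemma ghbar_tr {x y : X} (e : x = y) (h : ggrp G x) :
  ghbar G (tr (ggrp G) e h) = tr (ggrp G) (f_equal gbar e) (ghbar G h).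
Proof. destruct e. reflexivity. Qed.

End GraphOfGroups.

Section Bisets.
Context {Y X : Graph} {GY : GoG Y} {GX : GoG X} (HY : is_GoG GY) (HX : is_GoG GX).
Context {B : GoB GY GX} (HB : IsGoB B).

Lemma blact_ginv z g (x : bs B z) : blact B z (ginv g) (blact B z g x) = x.
Proof. rewrite <- (gob_lactM HB), gmulVl, (gob_lact1 HB). reflexivity. Qed.

Lemma bract_ginv z h (x : bs B z) : bract B z (bract B z x h) (ginv h) = x.
Proof. rewrite <- (gob_ractM HB), gmulV, (gob_ract1 HB). reflexivity. Qed.

Lemma bmin_lact z (x : bs B z) g (e : gst (blam B z) = blam B (gst z)) :
  bmin B z (blact B z g x) = blact B (gst z) (tr (ggrp GY) e (ghst GY g)) (bmin B z x).
Proof.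
  rewrite <- (gob_ract1 HB z x) at 1.
  rewrite (gob_cong_st HB z e (eq_sym (gob_rho_st HB z))), ghst_gone, tr_gone, (gob_ract1 HB);
    auto.
Qed.

Lemma bmin_ract z (x : bs B z) h (e : gst (brho B z) = brho B (gst z)) :
  bmin B z (bract B z x h) = bract B (gst z) (bmin B z x) (tr (ggrp GX) e (ghst GX h)).
Proof.
  rewrite <- (gob_lact1 HB z (bract B z x h)).
  rewrite (gob_cong_st HB z (eq_sym (gob_lam_st HB z)) e), ghst_gone, tr_gone, (gob_lact1 HB);
    auto.
Qed.

Lemma bbar_lact z (x : bs B z) g (e : gbar (blam B z) = blam B (gbar z)) :
  bbar B z (blact B z g x) = blact B (gbar z) (tr (ggrp GY) e (ghbar GY g)) (bbar B z x).
Proof.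
  rewrite <- (gob_ract1 HB z x) at 1.
  rewrite (gob_cong_bar HB z e (eq_sym (gob_rho_bar HB z))), ghbar_gone, tr_gone,
    (gob_ract1 HB); auto.
Qed.

Lemma bbar_ract z (x : bs B z) h (e : gbar (brho B z) = brho B (gbar z)) :
  bbar B z (bract B z x h) = bract B (gbar z) (bbar B z x) (tr (ggrp GX) e (ghbar GX h)).
Proof.
  rewrite <- (gob_lact1 HB z (bract B z x h)).
  rewrite (gob_cong_bar HB z (eq_sym (gob_lam_bar HB z)) e), ghbar_gone, tr_gone,
    (gob_lact1 HB); auto.
Qed.

Lemma tr_blact {z z'} (E : z = z') g (x : bs B z) :
  tr (bs B) E (blact B z g x) = blact B z' (tr (ggrp GY) (f_equal (blam B) E) g) (tr (bs B) E x).
Proof. destruct E. reflexivity. Qed.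

Lemma tr_bract {z z'} (E : z = z') h (x : bs B z) :
  tr (bs B) E (bract B z x h) = bract B z' (tr (bs B) E x) (tr (ggrp GX) (f_equal (brho B) E) h).
Proof. destruct E. reflexivity. Qed.

Section Fibre.
Variables (v : bg B) (f : X).

Lemma fibrel_equivalence : equivalence _ (fibrel B v f).
Proof.
  set (q (e : fib B v f) :=
         eq_trans (eq_sym (gob_lam_st HB _)) (f_equal (blam B) (proj2 (proj2_sig e)))
       : gst (blam B (proj1_sig e)) = blam B v).
  split.
  - intros [e [g b]]. exists e, g, gone, b, (q e). split.
    + rewrite ghst_gone, tr_gone, gmul1r by auto. reflexivity.
    + rewrite (gob_lact1 HB). reflexivity.
  - intros a b c [e [g [h [x [qe [-> ->]]]]]] [e' [g' [h' [x' [qe' [E1 ->]]]]]].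
    pose proof (f_equal (@projT1 _ _) E1) as Ee. simpl in Ee. subst e'.
    apply inj_pair2 in E1. injection E1 as -> <-.
    rewrite (proof_irrelevance _ qe' qe).
    exists e, g', (gmul h' h), x, qe. split.
    + rewrite ghst_gmul, tr_gmul, gmulA by auto. reflexivity.
    + rewrite (gob_lactM HB). reflexivity.
  - intros a b [e [g [h [x [qe [-> ->]]]]]].
    exists e, (gmul g (tr (ggrp GY) qe (ghst GY h))), (ginv h), (blact B _ h x), qe. split.
    + rewrite ghst_ginv, tr_ginv, <- gmulA, gmulV, gmul1r by auto. reflexivity.
    + rewrite blact_ginv. reflexivity.
Qed.

Lemma fibrel_same_edge e g1 b1 g2 b2 :
  fibrel B v f (existT _ e (g1, b1)) (existT _ e (g2, b2)) ->
  exists h q, g1 = gmul g2 (tr (ggrp GY) q (ghst GY h)) /\ b2 = blact B _ h b1.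
Proof.
  intros [e' [g [h [x [q [E1 E2]]]]]].
  pose proof (f_equal (@projT1 _ _) E1) as Ee. simpl in Ee. subst e'.
  apply inj_pair2 in E1, E2. injection E1 as -> ->. injection E2 as -> ->. eauto.
Qed.

Lemma fibmap_fibrel t t' : fibrel B v f t t' -> fibmap B v f t = fibmap B v f t'.
Proof.
  intros [e [g [h [b [q [-> ->]]]]]]. unfold fibmap. cbn [projT1 projT2 fst snd].
  rewrite (bmin_lact _ _ _ (eq_sym (gob_lam_st HB _))), tr_blact, <- (gob_lactM HB).
  do 2 f_equal. rewrite tr_trans. tr_irr_tac.
Qed.

End Fibre.

(* Over a vertex [f = brho B v] the fibre at [v] is [v] alone.  The lemmas below also cover
   that case ([f], resp. [brho B e], a vertex), so that the product argument need not
   distinguish whether [blam C e2] is an edge or a vertex. *)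
Section LeftFibrant.
Hypothesis LB : left_fibrant B.
Variable v : bg B.
Hypothesis Hv : is_vertex v.

Lemma left_fibrant_fibmap_surj f (Hf : gst f = brho B v) (x : bs B v) :
  exists e (E : brho B e = f /\ gst e = v) g x1,
    x = blact B v g (tr (bs B) (proj2 E) (bmin B e x1)).
Proof.
  destruct (classic (is_vertex f)) as [Vf | Vf].
  - exists v, (conj (eq_trans (eq_sym Hf) Vf) Hv), gone, x.
    rewrite (gob_st_vert HB), (gob_lact1 HB). reflexivity.
  - destruct (proj1 (proj2 (proj2 LB) v f Hv Vf Hf) x) as [[[e E] [g x1]] Hx].
    exists e, E, g, x1. symmetry. exact Hx.
Qed.

Lemma left_fibrant_edge_unique e e' (Ee : gst e = v) (Ee' : gst e' = v)
  (Hr : brho B e = brho B e') g g' x x' :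
  blact B v g (tr (bs B) Ee (bmin B e x)) = blact B v g' (tr (bs B) Ee' (bmin B e' x')) ->
  e = e'.
Proof.
  intro H. destruct LB as [_ [SB FB]].
  destruct (classic (is_vertex (brho B e))) as [Vr | Vr].
  - assert (Ve : is_vertex e) by exact (simplicial_reflects_vertex _ _ SB Vr).
    assert (Ve' : is_vertex e') by (rewrite Hr in Vr; exact (simplicial_reflects_vertex _ _ SB Vr)).
    exact (eq_trans (eq_sym Ve) (eq_trans Ee (eq_sym (eq_trans (eq_sym Ve') Ee')))).
  - assert (Hf : gst (brho B e) = brho B v) by (rewrite <- (gob_rho_st HB), Ee; reflexivity).
    pose (t := existT _ (exist _ e (conj eq_refl Ee)) (g, x) : fibsum B v (brho B e)).
    pose (t' := existT _ (exist _ e' (conj (eq_sym Hr) Ee')) (g', x') : fibsum B v (brho B e)).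
    assert (Ht : fibrel B v (brho B e) t t').
    { apply clos_rst_equivalence; [apply fibrel_equivalence|].
      apply (proj2 (FB v _ Hv Vr Hf) t t'). unfold fibmap; simpl.
      rewrite (tr_irr _ _ Ee), (tr_irr _ _ Ee'). exact H. }
    subst t t'. destruct Ht as [e0 [g0 [h0 [x0 [q0 [E1 E2]]]]]].
    apply (f_equal (fun t0 => proj1_sig (projT1 t0))) in E1, E2. simpl in E1, E2. congruence.
Qed.

Lemma left_fibrant_same_edge e (Ee : gst e = v) g g' x x' :
  blact B v g (tr (bs B) Ee (bmin B e x)) = blact B v g' (tr (bs B) Ee (bmin B e x')) ->
  exists m (q : gst (blam B e) = blam B v),
    g = gmul g' (tr (ggrp GY) q (ghst GY m)) /\ x' = blact B e m x.
Proof.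
  intro H. destruct LB as [_ [SB FB]].
  destruct (classic (is_vertex e)) as [Ve | Ve].
  - assert (Eev : e = v) by exact (eq_trans (eq_sym Ve) Ee). destruct Eev.
    rewrite !(gob_st_vert HB) in H.
    pose (q := eq_trans (eq_sym (gob_lam_st HB e)) (f_equal (blam B) Ve)).
    exists (gmul (ginv g') g), q. rewrite (ghst_vertex HY). split.
    + rewrite gmulA, gmulV, gmul1l. reflexivity.
    + rewrite (gob_lactM HB), H, blact_ginv. reflexivity.
  - assert (Vr : ~ is_vertex (brho B e)) by exact (proj2 SB e Ve).
    assert (Hf : gst (brho B e) = brho B v) by (rewrite <- (gob_rho_st HB), Ee; reflexivity).
    apply (fibrel_same_edge v (brho B e) (exist _ e (conj eq_refl Ee))).
    apply clos_rst_equivalence; [apply fibrel_equivalence|].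
    apply (proj2 (FB v _ Hv Vr Hf)). unfold fibmap; simpl.
    rewrite !(tr_irr _ (proj2 _) Ee). exact H.
Qed.

End LeftFibrant.
End Bisets.

Arguments pcar {Y X W GY GX GW} B C.
Arguments pst {Y X W GY GX GW B C} HB HC p.
Arguments pbar {Y X W GY GX GW B C} HB HC p.
Arguments tens_rel {Y X W GY GX GW B C b c} p _ _.
Arguments pbs {Y X W GY GX GW B C} p.
Arguments plact {Y X W GY GX GW B C} HB HC p g q.
Arguments pract {Y X W GY GX GW B C} HB HC p q h.
Arguments pmin {Y X W GY GX GW B C} HB HC p q.
Arguments pbarb {Y X W GY GX GW B C} HB HC p q.

Section Product.
Context {Y X W : Graph} {GY : GoG Y} {GX : GoG X} {GW : GoG W}.
Context (HY : is_GoG GY) (HX : is_GoG GX) (HW : is_GoG GW).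
Context {B : GoB GY GX} {C : GoB GX GW} (HB : IsGoB B) (HC : IsGoB C).

Notation P := (gob_prod HB HC).
Notation pfst p := (fst (proj1_sig p)).
Notation psnd p := (snd (proj1_sig p)).
Notation tcls r := (cls (tens_rel r)).

Lemma pcar_eq (p q : pcar B C) : pfst p = pfst q -> psnd p = psnd q -> p = q.
Proof.
  destruct p as [[b c] r], q as [[b' c'] r']. simpl. intros -> ->.
  f_equal. apply proof_irrelevance.
Qed.

Section Tensor.
Context {b : bg B} {c : bg C} (r : brho B b = blam C c).

Lemma tens_rel_iff x1 y1 x2 y2 :
  tens_rel r (x1, y1) (x2, y2) <->
  exists h, x1 = bract B b x2 h /\ y2 = blact C c (tr (ggrp GX) r h) y1.
Proof.
  split.
  - intros [x [h [y [E1 E2]]]]. injection E1 as -> ->. injection E2 as -> ->. eauto.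
  - intros [h [-> ->]]. exists x2, h, y1. auto.
Qed.

Lemma tens_rel_equivalence : equivalence _ (tens_rel r).
Proof.
  split.
  - intros [x y]. apply tens_rel_iff. exists gone.
    rewrite (gob_ract1 HB), tr_gone, (gob_lact1 HC). auto.
  - intros [x1 y1] [x2 y2] [x3 y3] H H'.
    apply tens_rel_iff in H as [h [-> ->]]. apply tens_rel_iff in H' as [h' [-> ->]].
    apply tens_rel_iff. exists (gmul h' h).
    rewrite (gob_ractM HB), tr_gmul, (gob_lactM HC). auto.
  - intros [x1 y1] [x2 y2] H. apply tens_rel_iff in H as [h [-> ->]].
    apply tens_rel_iff. exists (ginv h).
    rewrite (bract_ginv HB), tr_ginv, (blact_ginv HC). auto.
Qed.

Lemma tcls_eq x1 y1 x2 y2 :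
  tcls r (x1, y1) = tcls r (x2, y2) <->
  exists h, x1 = bract B b x2 h /\ y2 = blact C c (tr (ggrp GX) r h) y1.
Proof.
  rewrite cls_eq, <- tens_rel_iff. split; [|apply rst_step].
  apply clos_rst_equivalence, tens_rel_equivalence.
Qed.

Lemma tcls_map {b' c'} (r' : brho B b' = blam C c') F :
  (forall x h y, tens_rel r' (F (bract B b x h, y)) (F (x, blact C c (tr (ggrp GX) r h) y))) ->
  forall t, tcls r' (F (rep (tcls r t))) = tcls r' (F t).
Proof.
  intro HF. apply cls_rep_map. intros t t' [x [h [y [-> ->]]]]. apply rst_step, HF.
Qed.

End Tensor.

Lemma pbs_ind (p : pcar B C) (Pr : pbs p -> Prop) :
  (forall x y, Pr (tcls (proj2_sig p) (x, y))) -> forall q, Pr q.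
Proof. intros H. apply Quot_ind. intros [x y]. apply H. Qed.

Lemma plact_cls (p : pcar B C) g x y :
  plact HB HC p g (tcls (proj2_sig p) (x, y)) = tcls (proj2_sig p) (blact B _ g x, y).
Proof.
  apply (tcls_map _ _ (fun t => (blact B _ g (fst t), snd t))).
  intros x' h y'. cbn [fst snd]. apply tens_rel_iff. exists h. rewrite (gob_lract HB). auto.
Qed.

Lemma pract_cls (p : pcar B C) k x y :
  pract HB HC p (tcls (proj2_sig p) (x, y)) k = tcls (proj2_sig p) (x, bract C _ y k).
Proof.
  apply (tcls_map _ _ (fun t => (fst t, bract C _ (snd t) k))).
  intros x' h y'. cbn [fst snd]. apply tens_rel_iff. exists h. rewrite (gob_lract HC). auto.
Qed.

Lemma pmin_cls (p : pcar B C) x y :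
  pmin HB HC p (tcls (proj2_sig p) (x, y)) =
  tcls (proj2_sig (pst HB HC p)) (bmin B _ x, bmin C _ y).
Proof.
  apply (tcls_map _ _ (fun t => (bmin B _ (fst t), bmin C _ (snd t)))).
  intros x' h y'. cbn [fst snd]. apply tens_rel_iff.
  exists (tr (ggrp GX) (eq_sym (gob_rho_st HB _)) (ghst GX h)). split.
  - apply (bmin_ract HY HB).
  - rewrite (bmin_lact HW HC _ _ _ (eq_sym (gob_lam_st HC _))), ghst_tr, !tr_trans.
    f_equal. tr_irr_tac.
Qed.

Lemma pbarb_cls (p : pcar B C) x y :
  pbarb HB HC p (tcls (proj2_sig p) (x, y)) =
  tcls (proj2_sig (pbar HB HC p)) (bbar B _ x, bbar C _ y).
Proof.
  apply (tcls_map _ _ (fun t => (bbar B _ (fst t), bbar C _ (snd t)))).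
  intros x' h y'. cbn [fst snd]. apply tens_rel_iff.
  exists (tr (ggrp GX) (eq_sym (gob_rho_bar HB _)) (ghbar GX h)). split.
  - apply (bbar_ract HY HB).
  - rewrite (bbar_lact HW HC _ _ _ (eq_sym (gob_lam_bar HC _))), ghbar_tr, !tr_trans.
    f_equal. tr_irr_tac.
Qed.

Lemma tr_tcls (p p' : pcar B C) (E : p = p') x y :
  tr pbs E (tcls (proj2_sig p) (x, y)) =
  tcls (proj2_sig p') (tr (bs B) (f_equal (fun q => pfst q) E) x,
                       tr (bs C) (f_equal (fun q => psnd q) E) y).
Proof. destruct E. reflexivity. Qed.

Lemma pgraph_is_graph : is_graph (pgraph Y X W GY GX GW B C HB HC).
Proof.
  destruct (gob_graph HB) as [Bbb [Bst Bvb]], (gob_graph HC) as [Cbb [Cst Cvb]].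
  split; [|split].
  - intro p. apply pcar_eq; [apply Bbb | apply Cbb].
  - intro p. apply pcar_eq; [apply Bst | apply Cst].
  - intro p. split; intro H; apply pcar_eq;
      apply (f_equal (fun q : pcar B C => pfst q)) in H as H1;
      apply (f_equal (fun q : pcar B C => psnd q)) in H as H2;
      [apply Bvb | apply Cvb | apply Bvb | apply Cvb]; assumption.
Qed.

Ltac split_tcls := cbn [bs blact bract bmin bbar gob_prod] in *;
  repeat match goal with |- forall q : pbs _, _ => refine (pbs_ind _ _ _); intros ?x ?y end;
  repeat first [rewrite plact_cls | rewrite pract_cls | rewrite pmin_cls | rewrite pbarb_cls].

Lemma prod_IsGoB : IsGoB P.
Proof.
  constructor.
  - apply pgraph_is_graph.
  - intro z. apply (gob_lam_st HB).
  - intro z. apply (gob_lam_bar HB).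
  - intro z. apply (gob_rho_st HC).
  - intro z. apply (gob_rho_bar HC).
  - intro z. split_tcls. rewrite (gob_lact1 HB). reflexivity.
  - intros z g h. split_tcls. rewrite (gob_lactM HB). reflexivity.
  - intro z. split_tcls. rewrite (gob_ract1 HC). reflexivity.
  - intros z q g h. revert q. split_tcls. rewrite (gob_ractM HC). reflexivity.
  - intros z g q h. revert q. split_tcls. reflexivity.
  - intros z e1 e2 g q h. revert q. split_tcls.
    rewrite (bmin_lact HX HB _ _ _ e1), (bmin_ract HX HC _ _ _ e2). reflexivity.
  - intros z e1 e2 g q h. revert q. split_tcls.
    rewrite (bbar_lact HX HB _ _ _ e1), (bbar_ract HX HC _ _ _ e2). reflexivity.
  - intros z e. split_tcls. rewrite tr_tcls.
    f_equal. f_equal; [apply (gob_bar_bar HB) | apply (gob_bar_bar HC)].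
  - intros z e. split_tcls. rewrite tr_tcls.
    f_equal. f_equal; [apply (gob_st_vert HB) | apply (gob_st_vert HC)].
  - intros z e. split_tcls. rewrite tr_tcls.
    f_equal. f_equal; [apply (gob_bar_vert HB) | apply (gob_bar_vert HC)].
Qed.

Lemma fibmap_tcls (v : bg P) (f : W) (e : bg P) (Ee : brho P e = f /\ gst e = v) g x y
  (E1 : gst (pfst e) = pfst v) (E2 : gst (psnd e) = psnd v) :
  fibmap P v f (existT _ (exist _ e Ee) (g, tcls (proj2_sig e) (x, y))) =
  tcls (proj2_sig v) (blact B _ g (tr (bs B) E1 (bmin B _ x)), tr (bs C) E2 (bmin C _ y)).
Proof.
  unfold fibmap. cbn [projT1 projT2 proj1_sig fst snd blact bmin gob_prod].
  rewrite pmin_cls, tr_tcls, plact_cls. f_equal. f_equal; [f_equal|]; tr_irr_tac.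
Qed.

Lemma prho_morphism : is_morphism (brho P).
Proof. split; intro z; [apply (gob_rho_st HC) | apply (gob_rho_bar HC)]. Qed.

Lemma prho_simplicial :
  is_simplicial (brho B) -> is_simplicial (brho C) -> is_simplicial (brho P).
Proof.
  intros SB SC. split; [exact prho_morphism|].
  intros p Hp Hv. apply Hp.
  assert (Vc : is_vertex (psnd p)) by exact (simplicial_reflects_vertex _ _ SC Hv).
  assert (Vl : is_vertex (brho B (pfst p))).
  { unfold is_vertex. rewrite (proj2_sig p), <- (gob_lam_st HC), Vc. reflexivity. }
  apply pcar_eq; [exact (simplicial_reflects_vertex _ _ SB Vl) | exact Vc].
Qed.

Section Fibrancy.
Hypotheses (LB : left_fibrant B) (LC : left_fibrant C).
Variables (v : bg P) (f : W).
Hypotheses (Hv : is_vertex v) (Hf : gst f = brho P v).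

Let Hv1 : is_vertex (pfst v) := f_equal (fun p : pcar B C => pfst p) Hv.
Let Hv2 : is_vertex (psnd v) := f_equal (fun p : pcar B C => psnd p) Hv.

Lemma prod_fibmap_surj (z : pbs v) : exists t, fibmap P v f t = z.
Proof.
  revert z. refine (pbs_ind _ _ _). intros x y.
  destruct (left_fibrant_fibmap_surj HC LC _ Hv2 f Hf y) as [e2 [E2 [k [y2 ->]]]].
  assert (Hl : gst (blam C e2) = brho B (pfst v)).
  { rewrite <- (gob_lam_st HC), (proj2 E2). symmetry. apply (proj2_sig v). }
  pose (k' := tr (ggrp GX) (eq_sym (proj2_sig v)) k).
  destruct (left_fibrant_fibmap_surj HB LB _ Hv1 _ Hl (bract B _ x k'))
    as [e1 [E1 [g [x1 Hx]]]].
  pose (e := exist _ (e1, e2) (proj1 E1) : bg P).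
  assert (Ee : brho P e = f /\ gst e = v)
    by (split; [apply E2 | apply pcar_eq; apply E1 || apply E2]).
  exists (existT _ (exist _ e Ee) (g, tcls (proj1 E1) (x1, y2))).
  rewrite (fibmap_tcls _ _ e Ee _ _ _ (proj2 E1) (proj2 E2)). subst e. cbn [proj1_sig fst snd].
  rewrite <- Hx.
  apply tcls_eq. exists k'. split; [reflexivity|].
  unfold k'. rewrite tr_trans, tr_refl. reflexivity.
Qed.

Lemma prod_fibrel_first_factor e1 e1' e2 (r : brho B e1 = blam C e2)
  (r' : brho B e1' = blam C e2)
  (Ee : brho P (exist _ (e1, e2) r) = f /\ gst (exist _ (e1, e2) r : bg P) = v)
  (Ee' : brho P (exist _ (e1', e2) r') = f /\ gst (exist _ (e1', e2) r' : bg P) = v)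
  (E1 : gst e1 = pfst v) (E1' : gst e1' = pfst v) g g' x1 x1' y2 :
  blact B _ g (tr (bs B) E1 (bmin B e1 x1)) = blact B _ g' (tr (bs B) E1' (bmin B e1' x1')) ->
  fibrel P v f (existT _ (exist _ _ Ee) (g, tcls r (x1, y2)))
               (existT _ (exist _ _ Ee') (g', tcls r' (x1', y2))).
Proof.
  intro Hx.
  assert (He1 : e1 = e1')
    by exact (left_fibrant_edge_unique HY HB LB _ Hv1 _ _ E1 E1' (eq_trans r (eq_sym r'))
                _ _ _ _ Hx).
  subst e1'. rewrite (proof_irrelevance _ E1' E1) in Hx.
  assert (r' = r) by apply proof_irrelevance. subst r'.
  assert (Ee' = Ee) by apply proof_irrelevance. subst Ee'.
  destruct (left_fibrant_same_edge HY HB LB _ Hv1 _ E1 _ _ _ _ Hx) as [k [qk [-> ->]]].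
  exists (exist _ _ Ee : fib P v f), g', k, (tcls r (x1, y2)), qk. split; [reflexivity|].
  cbn [blact gob_prod]. rewrite plact_cls. reflexivity.
Qed.

Lemma prod_fibmap_inj t t' : fibmap P v f t = fibmap P v f t' -> fibrel P v f t t'.
Proof.
  destruct t as [[[[e1 e2] r] Ee] [g q]], t' as [[[[e1' e2'] r'] Ee'] [g' q']].
  assert (E1 : gst e1 = pfst v) by exact (f_equal (fun p : pcar B C => pfst p) (proj2 Ee)).
  assert (E2 : gst e2 = psnd v) by exact (f_equal (fun p : pcar B C => psnd p) (proj2 Ee)).
  assert (E1' : gst e1' = pfst v) by exact (f_equal (fun p : pcar B C => pfst p) (proj2 Ee')).
  assert (E2' : gst e2' = psnd v) by exact (f_equal (fun p : pcar B C => psnd p) (proj2 Ee')).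
  revert q q'. refine (pbs_ind _ _ _). intros x1 y2.
  refine (pbs_ind _ _ _). intros x1' y2' H.
  apply (eq_trans (eq_sym (fibmap_tcls _ _ _ Ee g x1 y2 E1 E2))) in H.
  apply (fun H => eq_trans H (fibmap_tcls _ _ _ Ee' g' x1' y2' E1' E2')) in H.
  apply tcls_eq in H as [h [Hx Hy]]. cbn [proj1_sig proj2_sig fst snd] in *.
  assert (Hy' : blact C _ (tr (ggrp GX) (proj2_sig v) h) (tr (bs C) E2 (bmin C e2 y2)) =
                blact C _ gone (tr (bs C) E2' (bmin C e2' y2'))).
  { rewrite (gob_lact1 HC). symmetry. exact Hy. }
  assert (He2 : e2 = e2') by exact (left_fibrant_edge_unique HX HC LC _ Hv2 _ _ E2 E2'
    (eq_trans (proj1 Ee) (eq_sym (proj1 Ee'))) _ _ _ _ Hy').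
  subst e2'. rewrite (proof_irrelevance _ E2' E2) in Hy'.
  destruct (left_fibrant_same_edge HX HC LC _ Hv2 _ E2 _ _ _ _ Hy') as [m [qm [Hh ->]]].
  rewrite gmul1l in Hh.
  (* moving [m] across the tensor sign makes the two C-components equal *)
  set (m' := tr (ggrp GX) (eq_sym r') m).
  assert (Hq : tcls r' (bract B e1' x1' m', y2) = tcls r' (x1', blact C e2 m y2)).
  { apply tcls_eq. exists m'. split; [reflexivity|].
    unfold m'. rewrite tr_trans, tr_refl. reflexivity. }
  rewrite <- Hq. apply (prod_fibrel_first_factor _ _ _ _ _ _ _ E1 E1').
  rewrite Hx, (bmin_ract HY HB _ _ _ (eq_sym (gob_rho_st HB _))), tr_bract, (gob_lract HB).
  f_equal. unfold m'.
  rewrite (tr_move (fun x => ggrp GX x) _ _ _ Hh), ghst_tr, !tr_trans. tr_irr_tac.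
Qed.

End Fibrancy.

Lemma prod_left_fibrant : left_fibrant B -> left_fibrant C -> left_fibrant P.
Proof.
  intros LB LC. split; [exact prod_IsGoB | split].
  - exact (prho_simplicial (proj1 (proj2 LB)) (proj1 (proj2 LC))).
  - intros v f Hv _ Hf. split; [exact (prod_fibmap_surj LB LC v f Hv Hf)|].
    intros t t'. split.
    + intro H. apply rst_step. exact (prod_fibmap_inj LB LC v f Hv t t' H).
    + intro H. induction H; try congruence.
      exact (fibmap_fibrel HW prod_IsGoB v f _ _ H).
Qed.

Lemma prod_left_free : left_free B -> left_free C -> left_free P.
Proof.
  intros [LB FB] [LC FC]. split; [exact (prod_left_fibrant LB LC)|].
  intros z g. cbn [bs blact gob_prod]. refine (pbs_ind _ _ _). intros x y H.
  rewrite plact_cls in H. apply tcls_eq in H as [h [Hx Hy]].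
  assert (Hh : h = gone).
  { rewrite (tr_move (fun x => ggrp GX x) _ _ _ (FC _ _ y (eq_sym Hy))). apply tr_gone. }
  rewrite Hh, (gob_ract1 HB) in Hx. exact (FB _ _ _ Hx).
Qed.

Lemma prho_graph_iso : is_graph_iso (brho B) -> is_graph_iso (brho C) -> is_graph_iso (brho P).
Proof.
  intros [_ [iB [iB1 iB2]]] [_ [iC [iC1 iC2]]]. split; [exact prho_morphism|].
  exists (fun w => exist _ (iB (blam C (iC w)), iC w) (iB2 _) : bg P). split.
  - intro p. apply pcar_eq; cbn [proj1_sig fst snd brho gob_prod]; unfold prho.
    + rewrite iC1, <- (proj2_sig p), iB1. reflexivity.
    + apply iC1.
  - intro w. apply iC2.
Qed.

Lemma prod_lact_principal (p : bg P) :
  (exists x : bs B (pfst p), True) ->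
  (forall x x' : bs B (pfst p), exists! g, blact B _ g x = x') ->
  (exists y : bs C (psnd p), True) ->
  (forall y y' : bs C (psnd p), exists! k, blact C _ k y = y') ->
  (exists q : pbs p, True) /\ forall q q', exists! g, plact HB HC p g q = q'.
Proof.
  intros [x _] PB [y _] PC. split; [exists (tcls (proj2_sig p) (x, y)); trivial|].
  refine (pbs_ind _ _ _). intros x1 y1. refine (pbs_ind _ _ _). intros x2 y2.
  destruct (PC y1 y2) as [k [Hk Hku]].
  set (h := tr (ggrp GX) (eq_sym (proj2_sig p)) k).
  destruct (PB x1 (bract B _ x2 h)) as [g [Hg Hgu]].
  exists g. split.
  - rewrite plact_cls. apply tcls_eq. exists h. split; [exact Hg|].
    unfold h. rewrite tr_trans, tr_refl. symmetry. exact Hk.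
  - intros g' H. rewrite plact_cls in H. apply tcls_eq in H as [h' [Hx Hy]]. apply Hgu.
    rewrite Hx. f_equal. unfold h. apply (tr_move (fun x => ggrp GX x)).
    symmetry. apply Hku. symmetry. exact Hy.
Qed.

Lemma prod_left_principal : left_principal B -> left_principal C -> left_principal P.
Proof.
  intros [LB [PB IB]] [LC [PC IC]]. split; [exact (prod_left_fibrant LB LC) | split].
  - intro p. apply prod_lact_principal; apply PB || apply PC.
  - exact (prho_graph_iso IB IC).
Qed.

End Product.

Theorem mainTheorem13 (Y X W : Graph) (GY : GoG Y) (GX : GoG X) (GW : GoG W)
  (HY : is_GoG GY) (HX : is_GoG GX) (HW : is_GoG GW)
  (B : GoB GY GX) (C : GoB GX GW) (HB : IsGoB B) (HC : IsGoB C) :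
  (left_fibrant B -> left_fibrant C -> left_fibrant (gob_prod HB HC)) /\
  (left_free B -> left_free C -> left_free (gob_prod HB HC)) /\
  (left_principal B -> left_principal C -> left_principal (gob_prod HB HC)).
Proof.
  split; [|split].
  - exact (prod_left_fibrant HY HX HW HB HC).
  - exact (prod_left_free HY HX HW HB HC).
  - exact (prod_left_principal HY HX HW HB HC).
Qed.
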